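(* Let $0<\beta<1$, $T>0$, $n_T$ a positive integer, $\tau=T/n_T$, $t_k=k\tau$. Let $\varpi_j$ be defined by $(1-z)^\beta=\sum_{j\ge0}\varpi_j z^j$, $\varrho_j$ by $(1-z)^{-\beta}=\sum_{j\ge0}\varrho_jz^j$, $P_j:=\tau^\beta\varrho_j$, and for a sequence $w^0,\dots,w^{n_T}$ let $D_\tau^{(\beta)}w^k=\tau^{-\beta}\sum_{j=0}^k\varpi_{k-j}(w^j-w^0)$. Let $\{g^k\}_{k=0}^{n_T}$ and $\{\lambda_l\}_{l=0}^{n_T-1}$ be non-negative sequences, and assume there is a constant $\lambda$ independent of $\tau$ with $\lambda\ge\sum_{l=0}^{k-1}\lambda_l$ for $1\le k\le n_T$ and $\tau\le 1/\sqrt[\beta]{2\lambda(1+\beta)}$. Then for any non-negative sequence $\{v^k\}_{k=0}^{n_T}$ satisfying $$D_\tau^{(\beta)}v^k\le\sum_{l=1}^k\lambda_{k-l}v^l+g^k,\qquad 1\le k\le n_T,$$ it holds that $$v^k\le 2E_\beta(2\lambda t_k^\beta)\Big(v^0+\max_{1\le m\le k}\sum_{j=0}^mP_{m-j}\,g^{j}\Big),\qquad 1\le k\le n_T,$$ where $E_\beta(z)=\sum_{l=0}^\infty\frac{z^l}{\Gamma(1+l\beta)}$. *)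

From Stdlib Require Import Reals Lra Factorial.
From Coquelicot Require Import Coquelicot.
Open Scope R_scope.

Definition Gamma (s : R) : R :=
  RInt_gen (fun t => Rpower t (s - 1) * exp (- t)) (at_right 0) (Rbar_locally p_infty).

Definition mittag_leffler (beta z : R) : R :=
  Series (fun l => z ^ l / Gamma (1 + INR l * beta)).

Fixpoint falling (a : R) (j : nat) : R :=
  match j with O => 1 | S j' => falling a j' * (a - INR j') end.
Definition gbinom (a : R) (j : nat) : R := falling a j / INR (Factorial.fact j).

(* Coefficients of (1-z)^beta = sum_j varpi_j z^j, i.e. varpi_j = (-1)^j binom(beta,j). *)
Definition varpi (beta : R) (j : nat) : R := (-1) ^ j * gbinom beta j.
(* Coefficients of (1-z)^(-beta) = sum_j varrho_j z^j, i.e. varrho_j = (-1)^j binom(-beta,j). *)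
Definition varrho (beta : R) (j : nat) : R := (-1) ^ j * gbinom (- beta) j.

Definition Dtau (beta tau : R) (w : nat -> R) (k : nat) : R :=
  / Rpower tau beta * sum_f_R0 (fun j => varpi beta (k - j) * (w j - w O)) k.

(* max_{1 <= m <= k} f m  (for k >= 1). *)
Fixpoint max_from1 (f : nat -> R) (k : nat) : R :=
  match k with
  | O => f 1%nat
  | S O => f 1%nat
  | S k' => Rmax (max_from1 f k') (f k)
  end.

(* The coefficients of [(1-z)^beta] and [(1-z)^(-beta)] are convolution inverses,
   so inverting [D_tau^(beta)] writes [v^k - v^0] as [tau^beta sum_j varrho_(k-j) D v^j].
   The hypothesis then becomes a discrete Volterra inequality for the running
   maximum [W] of [v],
     [W^k <= F^k + x sum_(j <= k) varrho_(k-j) W^j],  [x = lambda tau^beta <= 1/2],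
   with [F^k = v^0 + max_m sum_j P_(m-j) g^j] nondecreasing.  Absorbing the
   diagonal term costs the factor 2, and comparison with the Neumann series of
   the resolvent of [(A W)^k = sum_(j < k) varrho_(k-j) W^j] gives
   [v^k <= 2 F^k sum_l (2x)^l (A^l 1)^k].  By Chu-Vandermonde, [A^l 1] is bounded by
   the coefficients of [(1-z)^(-(1 + l beta))], which are ratios of Gamma values;
   Bernoulli's inequality under the Gamma integral bounds them by
   [k^(l beta) / Gamma(1 + l beta)], and summing over [l] gives [E_beta(2 lambda t_k^beta)]. *)

From Stdlib Require Import Reals Lra Lia Factorial.
From Coquelicot Require Import Coquelicot.
Open Scope R_scope.

(** * Finite sums *)

(* Sums of [n] terms, so that the strictly lower-triangular Volterra sums below
   are empty at [n = 0] ([sum_f_R0 f n] has [n + 1] terms). *)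
Fixpoint sum_lt (f : nat -> R) (n : nat) : R :=
  match n with O => 0 | S n' => sum_lt f n' + f n' end.

Lemma sum_f_R0_sum_lt f n : sum_f_R0 f n = sum_lt f (S n).
Proof. induction n as [|n IH]; simpl in *; [lra|]. rewrite IH; simpl; lra. Qed.

Lemma sum_lt_S f n : sum_lt f (S n) = sum_lt f n + f n.
Proof. reflexivity. Qed.

Lemma sum_lt_ext f g n :
  (forall i, (i < n)%nat -> f i = g i) -> sum_lt f n = sum_lt g n.
Proof.
  induction n as [|n IH]; intros H; simpl; [lra|].
  rewrite IH, H by (intros; try apply H; lia); lra.
Qed.

Lemma sum_lt_le f g n :
  (forall i, (i < n)%nat -> f i <= g i) -> sum_lt f n <= sum_lt g n.
Proof.
  induction n as [|n IH]; intros H; simpl; [lra|].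
  apply Rplus_le_compat; [apply IH; intros; apply H|apply H]; lia.
Qed.

Lemma sum_lt_eq0 f n : (forall i, (i < n)%nat -> f i = 0) -> sum_lt f n = 0.
Proof.
  induction n as [|n IH]; intros H; simpl; [lra|].
  rewrite IH, H by (intros; try apply H; lia); lra.
Qed.

Lemma sum_lt_ge0 f n : (forall i, (i < n)%nat -> 0 <= f i) -> 0 <= sum_lt f n.
Proof.
  intros H. rewrite <- (sum_lt_eq0 (fun _ => 0) n) by reflexivity.
  now apply sum_lt_le.
Qed.

Lemma sum_lt_plus f g n : sum_lt (fun i => f i + g i) n = sum_lt f n + sum_lt g n.
Proof. induction n as [|n IH]; simpl; [lra|]. rewrite IH; lra. Qed.

Lemma sum_lt_scal c f n : sum_lt (fun i => c * f i) n = c * sum_lt f n.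
Proof. induction n as [|n IH]; simpl; [lra|]. rewrite IH; lra. Qed.

Lemma sum_lt_Sl f n : sum_lt f (S n) = f O + sum_lt (fun i => f (S i)) n.
Proof. induction n as [|n IH]; simpl in *; [lra|]. rewrite IH; lra. Qed.

Lemma sum_lt_rev f n : sum_lt (fun i => f (n - S i)%nat) n = sum_lt f n.
Proof.
  induction n as [|n IH]; [reflexivity|].
  rewrite sum_lt_Sl, Nat.sub_1_r.
  rewrite (sum_lt_ext _ (fun i => f (n - S i)%nat)) by (intros; f_equal; lia).
  rewrite IH; simpl; lra.
Qed.

Lemma sum_lt_swap (F : nat -> nat -> R) n m :
  sum_lt (fun i => sum_lt (F i) m) n = sum_lt (fun j => sum_lt (fun i => F i j) n) m.
Proof.
  induction n as [|n IH]; simpl.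
  - symmetry; now apply sum_lt_eq0.
  - now rewrite IH, <- sum_lt_plus.
Qed.

Lemma sum_lt_triangle (F : nat -> nat -> R) n :
  sum_lt (fun j => sum_lt (fun i => F i j) (S j)) n =
  sum_lt (fun i => sum_lt (fun m => F i (i + m)%nat) (n - i)) n.
Proof.
  induction n as [|n IH]; [reflexivity|].
  change (sum_lt (fun j => sum_lt (fun i => F i j) (S j)) n + sum_lt (fun i => F i n) (S n) =
          sum_lt (fun i => sum_lt (fun m => F i (i + m)%nat) (S n - i)) n
          + sum_lt (fun m => F n (n + m)%nat) (S n - n)).
  rewrite IH, Nat.sub_succ_l, Nat.sub_diag by lia.
  rewrite (sum_lt_ext (fun i => sum_lt _ (S n - i))
             (fun i => sum_lt (fun m => F i (i + m)%nat) (n - i) + F i n)).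
  - rewrite sum_lt_plus; simpl; rewrite Nat.add_0_r; lra.
  - intros i Hi. rewrite Nat.sub_succ_l by lia. simpl. do 3 f_equal. lia.
Qed.

Lemma sum_lt_drop_zeros f l n : (forall j, (j < l)%nat -> f j = 0) ->
  sum_lt f (l + n) = sum_lt (fun i => f (l + i)%nat) n.
Proof.
  intros H. induction n as [|n IH].
  - rewrite Nat.add_0_r. now apply sum_lt_eq0.
  - rewrite Nat.add_succ_r; simpl. now rewrite IH.
Qed.

(** * The coefficients of [(1-z)^(-a)] *)

(* The coefficient of [z^n] in [(1-z)^(-a)], namely [a (a+1) ... (a+n-1) / n!]. *)
Fixpoint rising_binom (a : R) (n : nat) : R :=
  match n with
  | O => 1
  | S n' => rising_binom a n' * (a + INR n') / INR (S n')
  end.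

Lemma rising_binom_S a n :
  INR (S n) * rising_binom a (S n) = rising_binom a n * (a + INR n).
Proof.
  change (rising_binom a (S n)) with (rising_binom a n * (a + INR n) / INR (S n)).
  field. apply not_0_INR; lia.
Qed.

Lemma gbinom_opp a n : (-1) ^ n * gbinom (- a) n = rising_binom a n.
Proof.
  unfold gbinom. induction n as [|n IH]; [simpl; lra|].
  change (rising_binom a (S n)) with (rising_binom a n * (a + INR n) / INR (S n)).
  rewrite <- IH, fact_simpl, mult_INR. simpl falling; simpl pow.
  assert (INR (fact n) <> 0) by apply INR_fact_neq_0.
  assert (INR (S n) <> 0) by (apply not_0_INR; lia).
  field; auto.
Qed.

Lemma varrho_rising_binom b n : varrho b n = rising_binom b n.
Proof. apply gbinom_opp. Qed.

Lemma varpi_rising_binom b n : varpi b n = rising_binom (- b) n.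
Proof. unfold varpi. rewrite <- gbinom_opp, Ropp_involutive. reflexivity. Qed.

Lemma rising_binom_ge0 a n : 0 <= a -> 0 <= rising_binom a n.
Proof.
  intros Ha. induction n as [|n IH]; simpl; [lra|].
  pose proof (pos_INR n). pose proof (lt_0_INR (S n) ltac:(lia)).
  apply Rmult_le_pos; [apply Rmult_le_pos; lra|].
  left; now apply Rinv_0_lt_compat.
Qed.

Lemma rising_binom_S_le a n : 0 <= a <= 1 -> rising_binom a (S n) <= rising_binom a n.
Proof.
  intros Ha. pose proof (rising_binom_ge0 a n ltac:(lra)).
  pose proof (rising_binom_S a n). rewrite S_INR in *. pose proof (pos_INR n).
  apply (Rmult_le_reg_l (INR n + 1)); nra.
Qed.

Lemma rising_binom_0_S n : rising_binom 0 (S n) = 0.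
Proof. induction n as [|n IH]; simpl in *; [lra|]. rewrite IH; lra. Qed.

Lemma rising_binom_1 n : rising_binom 1 n = 1.
Proof.
  induction n as [|n IH]; [reflexivity|]. simpl. rewrite IH.
  destruct n; [simpl; lra|]. field. pose proof (pos_INR (S n)); lra.
Qed.

(* Chu-Vandermonde: [(1-z)^(-a) (1-z)^(-b) = (1-z)^(-(a+b))]. *)
Lemma rising_binom_vandermonde a b n :
  sum_lt (fun i => rising_binom a i * rising_binom b (n - i)) (S n) =
  rising_binom (a + b) n.
Proof.
  induction n as [|n IH]; [simpl; lra|].
  set (t i := rising_binom a i * rising_binom b (S n - i)).
  apply (Rmult_eq_reg_l (INR (S n))); [|apply not_0_INR; lia].
  rewrite rising_binom_S, <- IH, <- sum_lt_scal.
  (* Split [S n = i + (S n - i)]; each part lowers the index of one factor. *)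
  rewrite (sum_lt_ext _ (fun i => INR i * t i + INR (S n - i) * t i)), sum_lt_plus.
  2:{ intros i Hi. rewrite <- Rmult_plus_distr_r, <- plus_INR. do 2 f_equal. lia. }
  replace (sum_lt (fun i => INR i * t i) (S (S n)))
    with (sum_lt (fun i => (a + INR i) * (rising_binom a i * rising_binom b (n - i))) (S n)).
  2:{ rewrite (sum_lt_Sl (fun i => INR i * t i)). simpl (INR 0).
      rewrite Rmult_0_l, Rplus_0_l.
      apply sum_lt_ext. intros i Hi. unfold t. simpl (S n - S i)%nat.
      rewrite <- (Rmult_assoc (INR (S i))), rising_binom_S. ring. }
  replace (sum_lt (fun i => INR (S n - i) * t i) (S (S n)))
    with (sum_lt (fun i => (b + INR (n - i)) * (rising_binom a i * rising_binom b (n - i))) (S n)).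
  2:{ change (sum_lt (fun i => INR (S n - i) * t i) (S (S n))) with
        (sum_lt (fun i => INR (S n - i) * t i) (S n) + INR (S n - S n) * t (S n)).
      rewrite Nat.sub_diag, Rmult_0_l, Rplus_0_r.
      apply sum_lt_ext. intros i Hi. unfold t. rewrite (Nat.sub_succ_l i n) by lia.
      transitivity (rising_binom a i * (INR (S (n - i)) * rising_binom b (S (n - i))));
        [rewrite rising_binom_S|]; ring. }
  rewrite <- sum_lt_plus, Rmult_comm, <- sum_lt_scal. apply sum_lt_ext. intros i Hi.
  rewrite minus_INR by lia. ring.
Qed.

(* [(1-z)^(-b) (1-z)^b = 1], coefficientwise. *)
Lemma varrho_varpi_inversion b (u : nat -> R) k :
  sum_lt (fun j => varrho b (k - j) *
                   sum_lt (fun i => varpi b (j - i) * u i) (S j)) (S k) = u k.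
Proof.
  rewrite (sum_lt_ext _
    (fun j => sum_lt (fun i => varrho b (k - j) * (varpi b (j - i) * u i)) (S j)))
    by (intros; now rewrite sum_lt_scal).
  rewrite sum_lt_triangle.
  rewrite (sum_lt_ext _ (fun i => if Nat.eq_dec i k then u k else 0)).
  - simpl. destruct (Nat.eq_dec k k) as [_|]; [|congruence].
    rewrite sum_lt_eq0; [lra|]. intros i Hi. destruct (Nat.eq_dec i k); [lia|lra].
  - intros i Hi.
    rewrite (sum_lt_ext _ (fun m => u i * (rising_binom (- b) m * rising_binom b (k - i - m)))).
    2:{ intros m Hm. rewrite varrho_rising_binom, varpi_rising_binom.
        replace (i + m - i)%nat with m by lia.
        replace (k - (i + m))%nat with (k - i - m)%nat by lia. ring. }
    rewrite sum_lt_scal, Nat.sub_succ_l by lia.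
    rewrite rising_binom_vandermonde, Rplus_opp_l.
    destruct (Nat.eq_dec i k) as [->|Hik].
    + rewrite Nat.sub_diag; simpl; ring.
    + replace (k - i)%nat with (S (k - i - 1)) by lia. rewrite rising_binom_0_S; ring.
Qed.

(** * A discrete fractional Gronwall inequality *)

Fixpoint run_max (V : nat -> R) (K : nat) : R :=
  match K with O => V O | S K' => Rmax (run_max V K') (V K) end.

Lemma run_max_ge V K i : (i <= K)%nat -> V i <= run_max V K.
Proof.
  induction K as [|K IH]; intros Hi; simpl.
  - replace i with O by lia; lra.
  - destruct (Nat.eq_dec i (S K)) as [->|]; [apply Rmax_r|].
    eapply Rle_trans; [apply IH; lia|apply Rmax_l].
Qed.

Lemma run_max_lub V K X : (forall i, (i <= K)%nat -> V i <= X) -> run_max V K <= X.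
Proof.
  induction K as [|K IH]; intros H; simpl; [apply H; lia|].
  apply Rmax_lub; [apply IH; intros; apply H|apply H]; lia.
Qed.

Lemma run_max_mono V i K : (i <= K)%nat -> run_max V i <= run_max V K.
Proof. intros H. apply run_max_lub. intros j Hj. apply run_max_ge. lia. Qed.

Definition volterra (b : R) (W : nat -> R) (K : nat) : R :=
  sum_lt (fun j => rising_binom b (K - j) * W j) K.

(* The discrete fractional integral of order [b]; its weights times [tau^b] are
   the [P_j] of the paper. *)
Definition frac_int (b : R) (W : nat -> R) (K : nat) : R :=
  sum_lt (fun j => rising_binom b (K - j) * W j) (S K).

Lemma frac_int_volterra b W K : frac_int b W K = volterra b W K + W K.
Proof. unfold frac_int, volterra. simpl. rewrite Nat.sub_diag. simpl; ring. Qed.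

Lemma frac_int_mono b W i K : 0 <= b ->
  (forall j, (j <= K)%nat -> 0 <= W j) ->
  (forall j, (j < K)%nat -> W j <= W (S j)) ->
  (i <= K)%nat -> frac_int b W i <= frac_int b W K.
Proof.
  intros Hb HW0 HWS HiK. induction HiK as [|K HiK IH]; [lra|].
  eapply Rle_trans; [apply IH; intros; [apply HW0|apply HWS]; lia|].
  unfold frac_int. rewrite (sum_lt_Sl _ (S K)).
  assert (0 <= rising_binom b (S K - 0) * W O).
  { apply Rmult_le_pos; [apply rising_binom_ge0|apply HW0]; auto; lia. }
  enough (sum_lt (fun j => rising_binom b (K - j) * W j) (S K) <=
          sum_lt (fun j => rising_binom b (S K - S j) * W (S j)) (S K)) by lra.
  apply sum_lt_le. intros j Hj. simpl (S K - S j)%nat.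
  apply Rmult_le_compat_l; [apply rising_binom_ge0; auto|apply HWS; lia].
Qed.

Definition iter_kernel (b : R) (l : nat) : nat -> R :=
  Nat.iter l (volterra b) (fun _ => 1).

Lemma iter_kernel_eq0 b l K : (K < l)%nat -> iter_kernel b l K = 0.
Proof.
  revert K; induction l as [|l IH]; intros K HK; [lia|].
  apply sum_lt_eq0. intros j Hj.
  change (Nat.iter l (volterra b) (fun _ => 1) j) with (iter_kernel b l j).
  rewrite IH by lia; ring.
Qed.

Lemma iter_kernel_ge0 b l K : 0 <= b -> 0 <= iter_kernel b l K.
Proof.
  intros Hb; revert K; induction l as [|l IH]; intros K; simpl; [lra|].
  apply sum_lt_ge0; intros. apply Rmult_le_pos; [apply rising_binom_ge0; auto|apply IH].
Qed.

(* The [l]-fold kernel is dominated by the kernel of order [1 + l b]: each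
   convolution with [rising_binom b] raises the order by [b] (Vandermonde),
   the dropped diagonal term accounting for the shift by [l]. *)
Lemma iter_kernel_le b l K : 0 <= b <= 1 -> (l <= K)%nat ->
  iter_kernel b l K <= rising_binom (1 + INR l * b) (K - l).
Proof.
  intros Hb. revert K; induction l as [|l IH]; intros K HK.
  - simpl. rewrite Rmult_0_l, Rplus_0_r, rising_binom_1. lra.
  - destruct K as [|K]; [lia|].
    set (N := (K - l)%nat). replace (S K) with (l + S N)%nat by (unfold N; lia).
    change (iter_kernel b (S l) (l + S N)%nat) with
      (sum_lt (fun j => rising_binom b (l + S N - j) * iter_kernel b l j) (l + S N)).
    rewrite sum_lt_drop_zeros by (intros j Hj; rewrite iter_kernel_eq0 by lia; ring).
    replace (l + S N - S l)%nat with N by lia.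
    rewrite S_INR. replace (1 + (INR l + 1) * b) with (1 + INR l * b + b) by ring.
    rewrite <- rising_binom_vandermonde.
    apply sum_lt_le. intros i Hi.
    replace (l + S N - (l + i))%nat with (S (N - i)) by lia.
    rewrite Rmult_comm. apply Rmult_le_compat.
    + apply iter_kernel_ge0; lra.
    + apply rising_binom_ge0; lra.
    + replace i with (l + i - l)%nat at 2 by lia. apply IH. lia.
    + now apply rising_binom_S_le.
Qed.

(* Truncation of the Neumann series [sum_l y^l A^l 1] of the resolvent of the
   Volterra operator [A = volterra b]; the terms with [l > N] vanish on [K <= N]. *)
Definition resolvent (b y : R) (N K : nat) : R :=
  sum_lt (fun l => y ^ l * iter_kernel b l K) (S N).

Lemma resolvent_rec b y N K : (K <= N)%nat ->
  resolvent b y N K = 1 + y * volterra b (resolvent b y N) K.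
Proof.
  intros HK. unfold resolvent, volterra.
  rewrite (sum_lt_ext
    (fun j => rising_binom b (K - j) * sum_lt (fun l => y ^ l * iter_kernel b l j) (S N))
    (fun j => sum_lt (fun l => y ^ l * (rising_binom b (K - j) * iter_kernel b l j)) (S N))).
  2:{ intros j _. rewrite <- sum_lt_scal. apply sum_lt_ext. intros; ring. }
  rewrite sum_lt_swap.
  rewrite (sum_lt_ext (fun l => sum_lt (fun j => y ^ l * _) K)
             (fun l => y ^ l * iter_kernel b (S l) K))
    by (intros; now rewrite sum_lt_scal).
  rewrite <- sum_lt_scal, sum_lt_Sl, (sum_lt_S _ N), (iter_kernel_eq0 b (S N) K) by lia.
  change (iter_kernel b 0 K) with 1.
  rewrite Rmult_1_l, Rmult_0_r, Rmult_0_r, Rplus_0_r. f_equal.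
  apply sum_lt_ext. intros; simpl; ring.
Qed.

Lemma resolvent_comparison b y N M c (W : nat -> R) :
  0 <= b -> 0 <= y -> (M <= N)%nat ->
  (forall K, (K <= M)%nat -> W K <= c + y * volterra b W K) ->
  forall K, (K <= M)%nat -> W K <= c * resolvent b y N K.
Proof.
  intros Hb Hy HMN HW K.
  induction K as [K IH] using (well_founded_induction Wf_nat.lt_wf). intros HK.
  rewrite resolvent_rec by lia.
  enough (volterra b W K <= c * volterra b (resolvent b y N) K)
    by (specialize (HW K HK); nra).
  unfold volterra. rewrite <- sum_lt_scal. apply sum_lt_le. intros j Hj.
  replace (c * (rising_binom b (K - j) * resolvent b y N j))
    with (rising_binom b (K - j) * (c * resolvent b y N j)) by ring.
  apply Rmult_le_compat_l; [now apply rising_binom_ge0|apply IH; lia].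
Qed.

Lemma run_max_frac_int_bound b x N (V F : nat -> R) :
  0 <= b -> 0 <= x -> 0 <= V O ->
  (forall i K, (i <= K <= N)%nat -> F i <= F K) ->
  (forall K, (K <= N)%nat -> V K <= F K + x * frac_int b (run_max V) K) ->
  forall K, (K <= N)%nat -> run_max V K <= F K + x * frac_int b (run_max V) K.
Proof.
  intros Hb Hx HV0 HF HV K HK. apply run_max_lub. intros i Hi.
  eapply Rle_trans; [apply HV; lia|].
  apply Rplus_le_compat; [apply HF; lia|]. apply Rmult_le_compat_l; [lra|].
  apply frac_int_mono; auto.
  - intros j _. eapply Rle_trans; [apply HV0|apply run_max_ge; lia].
  - intros j _. apply run_max_mono. lia.
Qed.

(* The diagonal term of [frac_int] is absorbed using [x <= 1/2], at the price of
   the factor 2. *)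
Lemma discrete_gronwall b x N (V F : nat -> R) :
  0 <= b <= 1 -> 0 <= x <= 1/2 -> 0 <= V O ->
  (forall K, (K <= N)%nat -> 0 <= F K) ->
  (forall i K, (i <= K <= N)%nat -> F i <= F K) ->
  (forall K, (K <= N)%nat -> V K <= F K + x * frac_int b (run_max V) K) ->
  forall K, (K <= N)%nat -> V K <= 2 * F K * resolvent b (2 * x) N K.
Proof.
  intros Hb Hx HV0 HF0 HF HV K0 HK0.
  assert (HW0 : forall j, 0 <= run_max V j).
  { intros j. eapply Rle_trans; [apply HV0|apply run_max_ge; lia]. }
  pose proof (run_max_frac_int_bound b x N V F ltac:(lra) ltac:(lra) HV0 HF HV) as HW.
  eapply Rle_trans; [apply (run_max_ge V K0 K0); lia|].
  apply (resolvent_comparison b (2 * x) N K0); [lra|lra|auto| |lia].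
  intros K HK. specialize (HW K ltac:(lia)). rewrite frac_int_volterra in HW.
  assert (0 <= volterra b (run_max V) K).
  { apply sum_lt_ge0. intros j _. apply Rmult_le_pos; [apply rising_binom_ge0; lra|auto]. }
  assert (F K <= F K0) by (apply HF; lia).
  specialize (HW0 K). nra.
Qed.

(** * The Gamma integral *)

Lemma ex_RInt_gen_0_infty_bounded (f : R -> R) M :
  (forall x, 0 < x -> continuous f x) -> (forall x, 0 < x -> 0 <= f x) ->
  (forall a b, 0 < a -> a <= b -> RInt f a b <= M) ->
  ex_RInt_gen f (at_right 0) (Rbar_locally p_infty).
Proof.
  intros Hc Hf HM.
  assert (Hex : forall a b, 0 < a -> 0 < b -> ex_RInt f a b).
  { intros a b Ha Hb. apply (ex_RInt_continuous (V := R_CompleteNormedModule)).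
    intros z Hz. apply Hc.
    eapply Rlt_le_trans; [|apply Hz]. now apply Rmin_glb_lt. }
  set (E y := exists a b, 0 < a <= b /\ y = RInt f a b).
  destruct (completeness E) as [S [HSub HSlub]].
  { exists M. intros y (a & b & Hab & ->). apply HM; lra. }
  { exists (RInt f 1 1), 1, 1. split; [lra|auto]. }
  exists S. intros P [eps Heps].
  (* The integrals over [a, b] increase as [a] decreases and [b] increases. *)
  assert (exists a0 b0, 0 < a0 <= b0 /\ S - eps < RInt f a0 b0) as (a0 & b0 & Hab0 & Hlt).
  { apply Classical_Prop.NNPP. intros Hn.
    enough (S <= S - eps) by (pose proof (cond_pos eps); lra).
    apply HSlub. intros y (a & b & Hab & ->).
    apply Rnot_lt_le. intros Hl. apply Hn. now exists a, b. }
  apply (Filter_prod _ _ _ (fun a => 0 < a < a0) (fun b => b0 < b)).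
  - exists (mkposreal a0 (proj1 Hab0)). intros y Hy Hy0. split; [exact Hy0|].
    change (Rabs (y - 0) < a0) in Hy. apply Rabs_lt_between in Hy. lra.
  - exists b0. auto.
  - intros a b Ha Hb. exists (RInt f a b).
    split; [apply (RInt_correct (V := R_CompleteNormedModule)), Hex; lra|].
    apply Heps. change (Rabs (RInt f a b - S) < eps).
    assert (RInt f a b <= S) by (apply HSub; exists a, b; split; [lra|auto]).
    assert (RInt f a0 b0 <= RInt f a b).
    { rewrite <- (RInt_Chasles f a a0 b), <- (RInt_Chasles f a0 b0 b) by (apply Hex; lra).
      assert (0 <= RInt f a a0) by (apply RInt_ge_0; [lra|apply Hex; lra|intros; apply Hf; lra]).
      assert (0 <= RInt f b0 b) by (apply RInt_ge_0; [lra|apply Hex; lra|intros; apply Hf; lra]).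
      unfold plus; simpl; lra. }
    rewrite Rabs_left1 by lra. lra.
Qed.

Lemma filter_prod_0_infty_pos :
  filter_prod (at_right 0) (Rbar_locally p_infty) (fun ab => 0 < fst ab /\ 0 < snd ab).
Proof.
  apply (Filter_prod _ _ _ (fun a => 0 < a) (fun b => 0 < b)); [|now exists 0|now split].
  exists (mkposreal 1 Rlt_0_1). now intros.
Qed.

Lemma is_RInt_gen_0_infty_derive (F f : R -> R) la lb :
  (forall x, 0 < x -> is_derive F x (f x)) -> (forall x, 0 < x -> continuous f x) ->
  filterlim F (at_right 0) (locally la) -> filterlim F (Rbar_locally p_infty) (locally lb) ->
  is_RInt_gen f (at_right 0) (Rbar_locally p_infty) (lb - la).
Proof.
  intros Hd Hc Ha Hb.
  assert (Hpos : forall a b x, 0 < a -> 0 < b -> Rmin a b <= x -> 0 < x).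
  { intros a b x Ha0 Hb0 Hx. eapply Rlt_le_trans; [|apply Hx]. now apply Rmin_glb_lt. }
  apply (is_RInt_gen_ext (Derive F)).
  - eapply filter_imp; [|exact filter_prod_0_infty_pos]. intros [a b] [Ha0 Hb0] x Hx.
    apply is_derive_unique, Hd, (Hpos a b); simpl in *; lra.
  - apply is_RInt_gen_Derive; auto;
      eapply filter_imp; try exact filter_prod_0_infty_pos; intros [a b] [Ha0 Hb0] x Hx;
      simpl in *; assert (Hx0 : 0 < x) by (apply (Hpos a b); lra).
    + eexists. now apply Hd.
    + apply (continuous_ext_loc _ f); [|now apply Hc].
      exists (mkposreal x Hx0). intros y Hy.
      change (Rabs (y - x) < x) in Hy. apply Rabs_lt_between in Hy.
      symmetry. apply is_derive_unique, Hd. lra.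
Qed.

Lemma is_RInt_gen_0_infty_le (f g : R -> R) lf lg :
  (forall x, 0 < x -> f x <= g x) ->
  is_RInt_gen f (at_right 0) (Rbar_locally p_infty) lf ->
  is_RInt_gen g (at_right 0) (Rbar_locally p_infty) lg -> lf <= lg.
Proof.
  intros Hfg Hf Hg.
  pose proof (is_RInt_gen_minus g f lg lf Hg Hf) as Hgf.
  assert (Hn : norm (minus lg lf) <= minus lg lf).
  { apply (RInt_gen_norm (V := R_CompleteNormedModule) (Fa := at_right 0)
      (Fb := Rbar_locally p_infty) (fun x => minus (g x) (f x)) (fun x => minus (g x) (f x)));
      auto.
    - apply (Filter_prod _ _ _ (fun a => 0 < a < 1) (fun b => 1 < b)); [|now exists 1|].
      + exists (mkposreal 1 Rlt_0_1). intros y Hy Hy0.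
        change (Rabs (y - 0) < 1) in Hy. apply Rabs_lt_between in Hy. lra.
      + simpl; intros; lra.
    - eapply filter_imp; [|exact filter_prod_0_infty_pos]. intros [a b] [Ha Hb] x Hx.
      simpl in *. specialize (Hfg x ltac:(lra)).
      unfold norm, minus, plus, opp; simpl; unfold abs; simpl.
      rewrite Rabs_pos_eq; lra. }
  revert Hn. unfold norm, minus, plus, opp; simpl; unfold abs; simpl.
  pose proof (Rabs_pos (lg + - lf)). lra.
Qed.

Lemma Rpower_pos x p : 0 < Rpower x p.
Proof. apply exp_pos. Qed.

Lemma Rpower_le_1 u p : 0 < u <= 1 -> 0 <= p -> Rpower u p <= 1.
Proof.
  intros Hu Hp. replace 1 with (Rpower 1 p).
  - now apply Rle_Rpower_l.
  - unfold Rpower. now rewrite ln_1, Rmult_0_r, exp_0.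
Qed.

Lemma Rpower_le_base u q : 0 < u <= 1 -> 1 <= q -> Rpower u q <= u.
Proof.
  intros Hu Hq. replace q with ((q - 1) + 1) by ring.
  rewrite Rpower_plus, Rpower_1 by lra.
  pose proof (Rpower_le_1 u (q - 1) Hu ltac:(lra)). nra.
Qed.

Lemma Rpower_le_1_plus t p : 0 < t -> 0 <= p <= 1 -> Rpower t p <= 1 + t.
Proof.
  intros Ht Hp. destruct (Rle_dec t 1).
  - pose proof (Rpower_le_1 t p ltac:(lra) ltac:(lra)). lra.
  - pose proof (Rle_Rpower t p 1 ltac:(lra) ltac:(lra)). rewrite Rpower_1 in *; lra.
Qed.

Lemma exp_neg_le_1 t : 0 <= t -> exp (- t) <= 1.
Proof.
  intros Ht. rewrite exp_Ropp, <- Rinv_1.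
  apply Rinv_le_contravar; [lra|]. pose proof (exp_ineq1_le t). lra.
Qed.

Definition gamma_integrand (p t : R) : R := Rpower t p * exp (- t).

Definition gamma_int (p : R) : R :=
  RInt_gen (gamma_integrand p) (at_right 0) (Rbar_locally p_infty).

Lemma Gamma_gamma_int s : Gamma s = gamma_int (s - 1).
Proof. reflexivity. Qed.

Lemma gamma_integrand_ge0 p t : 0 <= gamma_integrand p t.
Proof. unfold gamma_integrand. pose proof (Rpower_pos t p). pose proof (exp_pos (- t)). nra. Qed.

Lemma is_derive_gamma_integrand p x : 0 < x ->
  is_derive (gamma_integrand p) x
    (p * gamma_integrand (p - 1) x - gamma_integrand p x).
Proof.
  intros Hx. unfold gamma_integrand.
  replace (p * (Rpower x (p - 1) * exp (- x)) - Rpower x p * exp (- x))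
    with (plus (mult (p * Rpower x (p - 1)) (exp (- x))) (mult (Rpower x p) (- exp (- x))))
    by (unfold plus, mult; simpl; ring).
  apply (is_derive_mult (fun t => Rpower t p) (fun t => exp (- t))).
  - apply is_derive_Reals, derivable_pt_lim_power, Hx.
  - auto_derive; auto. ring.
  - exact Rmult_comm.
Qed.

Lemma continuous_gamma_integrand p x : 0 < x -> continuous (gamma_integrand p) x.
Proof.
  intros Hx. apply (ex_derive_continuous (K := R_AbsRing) (V := R_NormedModule)).
  eexists. now apply is_derive_gamma_integrand.
Qed.

Lemma lim_gamma_integrand_0 q : 1 <= q ->
  filterlim (gamma_integrand q) (at_right 0) (locally 0).
Proof.
  intros Hq. apply filterlim_locally. intros eps.
  exists (mkposreal (Rmin eps 1) (Rmin_glb_lt _ _ _ (cond_pos eps) Rlt_0_1)).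
  intros t Ht Ht0. change (Rabs (t - 0) < Rmin eps 1) in Ht. apply Rabs_lt_between in Ht.
  pose proof (Rmin_l eps 1). pose proof (Rmin_r eps 1).
  change (Rabs (gamma_integrand q t - 0) < eps).
  rewrite Rminus_0_r, Rabs_pos_eq by apply gamma_integrand_ge0. unfold gamma_integrand.
  pose proof (Rpower_le_base t q ltac:(lra) Hq). pose proof (Rpower_pos t q).
  pose proof (exp_pos (- t)). pose proof (exp_neg_le_1 t ltac:(lra)). nra.
Qed.

(* [t^q e^(-t) = (t e^(-t/q))^q] and [t e^(-t/q) -> 0]. *)
Lemma lim_gamma_integrand_infty q : 1 <= q ->
  filterlim (gamma_integrand q) (Rbar_locally p_infty) (locally 0).
Proof.
  intros Hq.
  assert (Hu : is_lim (fun t => - q * ((- / q * t + 0) * exp (- / q * t + 0))) p_infty 0).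
  { replace (Finite 0) with (Rbar_mult (- q) 0) by (simpl; f_equal; ring).
    apply is_lim_scal_l, (is_lim_comp_lin (fun y => y * exp y)).
    - replace (Rbar_plus (Rbar_mult (- / q) p_infty) 0) with m_infty;
        [apply is_lim_mul_exp_m|].
      assert (0 < / q) by (apply Rinv_0_lt_compat; lra).
      simpl. case Rle_dec; intros; [exfalso; lra|reflexivity].
    - apply Ropp_neq_0_compat, Rinv_neq_0_compat; lra. }
  apply filterlim_locally. intros eps.
  assert (Heps : 0 < Rmin eps 1) by (apply Rmin_glb_lt; [apply cond_pos|lra]).
  pose proof (Hu (ball 0 (mkposreal _ Heps)) (locally_ball _ _)) as [M HM].
  exists (Rmax M 0). intros t Ht.
  specialize (HM t ltac:(eapply Rle_lt_trans; [apply Rmax_l|exact Ht])).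
  assert (Ht0 : 0 < t) by (eapply Rle_lt_trans; [apply Rmax_r|exact Ht]).
  set (u := t * exp (- t / q)).
  assert (Hu0 : 0 < u) by (unfold u; pose proof (exp_pos (- t / q)); nra).
  replace (- q * ((- / q * t + 0) * exp (- / q * t + 0))) with u in HM
    by (unfold u; replace (- / q * t + 0) with (- t / q) by (field; lra); field; lra).
  change (Rabs (u - 0) < Rmin eps 1) in HM. apply Rabs_lt_between in HM.
  pose proof (Rmin_l eps 1). pose proof (Rmin_r eps 1).
  assert (Hpow : gamma_integrand q t = Rpower u q).
  { unfold gamma_integrand, u. rewrite <- Rpower_mult_distr by (auto; apply exp_pos).
    unfold Rpower at 3. rewrite ln_exp. f_equal. f_equal. field. lra. }
  change (Rabs (gamma_integrand q t - 0) < eps).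
  rewrite Rminus_0_r, Hpow, Rabs_pos_eq by (left; apply Rpower_pos).
  pose proof (Rpower_le_base u q ltac:(lra) Hq). lra.
Qed.

Lemma ex_gamma_int_le_1 p : 0 <= p <= 1 ->
  ex_RInt_gen (gamma_integrand p) (at_right 0) (Rbar_locally p_infty).
Proof.
  intros Hp. apply (ex_RInt_gen_0_infty_bounded _ 2).
  - intros; now apply continuous_gamma_integrand.
  - intros; apply gamma_integrand_ge0.
  - intros a b Ha Hab.
    set (G t := - ((2 + t) * exp (- t))).
    assert (HG : is_RInt (fun t => (1 + t) * exp (- t)) a b (minus (G b) (G a))).
    { apply (is_RInt_derive (V := R_CompleteNormedModule)).
      - intros x _. unfold G. auto_derive; auto. ring.
      - intros x _. apply (ex_derive_continuous (K := R_AbsRing) (V := R_NormedModule)).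
        auto_derive; auto. }
    assert (Hex : ex_RInt (gamma_integrand p) a b).
    { apply (ex_RInt_continuous (V := R_CompleteNormedModule)). intros z Hz.
      apply continuous_gamma_integrand. rewrite Rmin_left in Hz; lra. }
    eapply Rle_trans.
    + apply (RInt_le _ (fun t => (1 + t) * exp (- t))); [lra|auto|eexists; eauto|].
      intros x Hx. apply Rmult_le_compat_r; [left; apply exp_pos|].
      apply Rpower_le_1_plus; lra.
    + rewrite (is_RInt_unique _ _ _ _ HG). unfold minus, plus, opp, G; simpl.
      pose proof (exp_ineq1_le a). pose proof (exp_neg_le_1 a ltac:(lra)).
      assert (exp a * exp (- a) = 1) by (rewrite <- exp_plus, Rplus_opp_r; apply exp_0).
      pose proof (exp_pos (- b)). pose proof (exp_pos (- a)). nra.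
Qed.

Lemma is_RInt_gen_gamma_integrand_S p l : 0 <= p ->
  is_RInt_gen (gamma_integrand p) (at_right 0) (Rbar_locally p_infty) l ->
  is_RInt_gen (gamma_integrand (p + 1)) (at_right 0) (Rbar_locally p_infty) ((p + 1) * l).
Proof.
  intros Hp Hl.
  set (d t := (p + 1) * gamma_integrand p t - gamma_integrand (p + 1) t).
  assert (Hd : is_RInt_gen d (at_right 0) (Rbar_locally p_infty) (0 - 0)).
  { apply (is_RInt_gen_0_infty_derive (gamma_integrand (p + 1))).
    - intros x Hx. pose proof (is_derive_gamma_integrand (p + 1) x Hx) as H.
      now replace (p + 1 - 1) with p in H by ring.
    - intros x Hx.
      apply (continuous_minus (K := R_AbsRing) (V := R_NormedModule)
               (fun t => scal (p + 1) (gamma_integrand p t)));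
        [apply (continuous_scal_r (K := R_AbsRing) (V := R_NormedModule))|];
        now apply continuous_gamma_integrand.
    - apply lim_gamma_integrand_0; lra.
    - apply lim_gamma_integrand_infty; lra. }
  pose proof (is_RInt_gen_minus _ _ _ _ (is_RInt_gen_scal _ (p + 1) _ Hl) Hd) as H.
  replace ((p + 1) * l) with (minus (scal (p + 1) l) (0 - 0))
    by (unfold minus, plus, opp, scal; simpl; unfold mult; simpl; ring).
  eapply is_RInt_gen_ext; [|exact H]. apply filter_forall. intros ab x _.
  unfold d, minus, plus, opp, scal; simpl; unfold mult; simpl. ring.
Qed.

Lemma is_RInt_gen_gamma_integrand_0 :
  is_RInt_gen (gamma_integrand 0) (at_right 0) (Rbar_locally p_infty) 1.
Proof.
  replace 1 with (0 - (-1)) by ring.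
  apply (is_RInt_gen_0_infty_derive (fun t => - exp (- t))).
  - intros x Hx. unfold gamma_integrand. rewrite Rpower_O by auto.
    auto_derive; auto. ring.
  - intros; now apply continuous_gamma_integrand.
  - apply (filterlim_filter_le_1 (F := locally 0)); [apply filter_le_within|].
    replace (-1) with (- exp (- 0)) by (now rewrite Ropp_0, exp_0).
    apply (ex_derive_continuous (K := R_AbsRing) (V := R_NormedModule) (fun t => - exp (- t))).
    auto_derive; auto.
  - change (is_lim (fun t => - exp (- t)) p_infty 0).
    replace (Finite 0) with (Rbar_opp (Finite 0)) by (simpl; now rewrite Ropp_0).
    apply is_lim_opp.
    apply (is_lim_ext (fun t => exp (- 1 * t + 0))); [intros; f_equal; ring|].
    apply (is_lim_comp_lin exp); [|lra].
    replace (Rbar_plus (Rbar_mult (-1) p_infty) 0) with m_infty; [apply is_lim_exp_m|].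
    simpl. case Rle_dec; intros; [exfalso; lra|reflexivity].
Qed.

Lemma ex_gamma_int p : 0 <= p ->
  ex_RInt_gen (gamma_integrand p) (at_right 0) (Rbar_locally p_infty).
Proof.
  intros Hp. destruct (INR_archimed 1 p ltac:(lra)) as [n Hn].
  rewrite Rmult_1_r in Hn. revert p Hp Hn.
  induction n as [|n IH]; intros p Hp Hn; [simpl in Hn; lra|].
  destruct (Rle_dec p 1) as [Hp1|Hp1]; [apply ex_gamma_int_le_1; lra|].
  destruct (IH (p - 1)) as [l Hl]; [lra|rewrite S_INR in Hn; lra|].
  exists ((p - 1 + 1) * l). replace p with (p - 1 + 1) at 1 by ring.
  apply is_RInt_gen_gamma_integrand_S; [lra|exact Hl].
Qed.

Lemma gamma_int_correct p : 0 <= p ->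
  is_RInt_gen (gamma_integrand p) (at_right 0) (Rbar_locally p_infty) (gamma_int p).
Proof. intros Hp. apply (RInt_gen_correct (V := R_CompleteNormedModule)), ex_gamma_int, Hp. Qed.

Lemma gamma_int_unique p l :
  is_RInt_gen (gamma_integrand p) (at_right 0) (Rbar_locally p_infty) l -> gamma_int p = l.
Proof. apply (is_RInt_gen_unique (V := R_CompleteNormedModule)). Qed.

Lemma gamma_int_S p : 0 <= p -> gamma_int (p + 1) = (p + 1) * gamma_int p.
Proof.
  intros Hp. apply gamma_int_unique, is_RInt_gen_gamma_integrand_S, gamma_int_correct; auto.
Qed.

Lemma gamma_int_0 : gamma_int 0 = 1.
Proof. apply gamma_int_unique, is_RInt_gen_gamma_integrand_0. Qed.

Lemma gamma_int_INR m : gamma_int (INR m) = INR (fact m).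
Proof.
  induction m as [|m IH]; [apply gamma_int_0|].
  rewrite S_INR, gamma_int_S, IH, fact_simpl, mult_INR, S_INR by apply pos_INR.
  reflexivity.
Qed.

Lemma gamma_int_plus_INR a n : 0 <= a ->
  gamma_int (a + INR n) = gamma_int a * rising_binom (1 + a) n * INR (fact n).
Proof.
  intros Ha. induction n as [|n IH]; [simpl; rewrite Rplus_0_r; ring|].
  pose proof (pos_INR n).
  rewrite S_INR at 1. rewrite <- Rplus_assoc, gamma_int_S, IH, fact_simpl, mult_INR by lra.
  transitivity (gamma_int a * (INR (S n) * rising_binom (1 + a) (S n)) * INR (fact n));
    [rewrite rising_binom_S|]; ring.
Qed.

(* [t^a >= t^m - 1] on [(0, oo)] when [m <= a]. *)
Lemma gamma_int_ge_fact a m : 0 <= a -> INR m <= a -> INR (fact m) - 1 <= gamma_int a.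
Proof.
  intros Ha Hm.
  apply (is_RInt_gen_0_infty_le (fun t => gamma_integrand (INR m) t - gamma_integrand 0 t)
           (gamma_integrand a)).
  - intros t Ht. unfold gamma_integrand. rewrite Rpower_O by auto.
    pose proof (exp_pos (- t)). pose proof (Rpower_pos t a).
    destruct (Rle_dec 1 t).
    + assert (Rpower t (INR m) <= Rpower t a) by (apply Rle_Rpower; auto). nra.
    + assert (Rpower t (INR m) <= 1) by (apply Rpower_le_1; [lra|apply pos_INR]). nra.
  - rewrite <- gamma_int_INR, <- gamma_int_0.
    apply (is_RInt_gen_minus (gamma_integrand (INR m)) (gamma_integrand 0));
      apply gamma_int_correct; [apply pos_INR|lra].
  - now apply gamma_int_correct.
Qed.

Lemma gamma_int_pos a : 0 <= a -> 0 < gamma_int a.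
Proof.
  intros Ha. pose proof (gamma_int_ge_fact (a + 1 + 1) 2 ltac:(lra) ltac:(simpl; lra)).
  rewrite !gamma_int_S in H by lra. simpl in H. nra.
Qed.

Lemma Rpower_bernoulli y b : 0 < y -> 0 <= b <= 1 -> Rpower y b <= 1 - b + b * y.
Proof.
  intros Hy Hb. unfold Rpower. set (m := b * ln y).
  pose proof (exp_ineq1_le (ln y - m)) as E1. pose proof (exp_ineq1_le (- m)) as E2.
  assert (exp m * (1 + (ln y - m)) <= exp (ln y)).
  { replace (ln y) with (m + (ln y - m)) at 2 by ring.
    rewrite exp_plus. apply Rmult_le_compat_l; [left; apply exp_pos|auto]. }
  rewrite exp_ln in H by auto.
  assert (exp m * (1 - m) <= exp m * exp (- m))
    by (apply Rmult_le_compat_l; [left; apply exp_pos|lra]).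
  rewrite <- exp_plus, Rplus_opp_r, exp_0 in H0.
  assert (exp m = (1 - b) * (exp m * (1 - m)) + b * (exp m * (1 + (ln y - m))))
    by (unfold m; ring).
  nra.
Qed.

Lemma fact_add_le n l : INR (fact (n + l)) <= INR (fact n) * INR (n + l + 1) ^ l.
Proof.
  induction l as [|l IH]; [rewrite Nat.add_0_r; simpl; lra|].
  rewrite Nat.add_succ_r, fact_simpl, mult_INR, <- tech_pow_Rmult.
  set (K := INR (S (n + l) + 1)).
  assert (INR (n + l + 1) ^ l <= K ^ l)
    by (apply pow_incr; split; [apply pos_INR|apply le_INR; lia]).
  assert (INR (fact (n + l)) <= INR (fact n) * K ^ l)
    by (pose proof (INR_fact_lt_0 n); nra).
  assert (INR (S (n + l)) <= K) by (apply le_INR; lia).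
  pose proof (INR_fact_lt_0 (n + l)). pose proof (pos_INR (S (n + l))). nra.
Qed.

(* [t^(l b) <= k^(l b) ((1 - b) + b (t/k)^l)] by Bernoulli, then multiply by [t^n e^(-t)]. *)
Lemma gamma_integrand_le_mix b l n k t : 0 <= b <= 1 -> 0 < k -> 0 < t ->
  gamma_integrand (INR l * b + INR n) t <=
  Rpower k (INR l * b) *
    ((1 - b) * gamma_integrand (INR n) t + b / k ^ l * gamma_integrand (INR (n + l)) t).
Proof.
  intros Hb Hk Ht. unfold gamma_integrand. set (a := INR l * b).
  assert (Htk : 0 < t / k) by (apply Rdiv_lt_0_compat; auto).
  assert (Hta : Rpower t a <= Rpower k a * (1 - b + b * (t / k) ^ l)).
  { pose proof (Rpower_bernoulli ((t / k) ^ l) b (pow_lt _ _ Htk) Hb) as HB.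
    rewrite <- Rpower_pow, Rpower_mult in HB by auto.
    replace (Rpower t a) with (Rpower (t / k) a * Rpower k a)
      by (rewrite Rpower_mult_distr by auto; f_equal; field; lra).
    rewrite Rpower_pow in HB by auto. pose proof (Rpower_pos k a). fold a in HB. nra. }
  rewrite Rpower_plus, !Rpower_pow, pow_add by auto.
  pose proof (pow_lt t n Ht). pose proof (exp_pos (- t)).
  replace (Rpower k a * ((1 - b) * (t ^ n * exp (- t)) + b / k ^ l * (t ^ n * t ^ l * exp (- t))))
    with (Rpower k a * (1 - b + b * (t / k) ^ l) * (t ^ n * exp (- t)))
    by (unfold Rdiv; rewrite Rpow_mult_distr, pow_inv; field; apply pow_nonzero; lra).
  rewrite <- Rmult_assoc. apply Rmult_le_compat_r; [lra|]. apply Rmult_le_compat_r; lra.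
Qed.

(* By [gamma_int_plus_INR] the left-hand side is [Gamma (1 + l b + n) / n!]. *)
Lemma gamma_int_rising_binom_le b l n : 0 <= b <= 1 ->
  gamma_int (INR l * b) * rising_binom (1 + INR l * b) n <= Rpower (INR (n + l + 1)) (INR l * b).
Proof.
  intros Hb. set (a := INR l * b). set (k := INR (n + l + 1)).
  assert (Ha : 0 <= a) by (unfold a; pose proof (pos_INR l); nra).
  assert (Hk : 0 < k) by (apply lt_0_INR; lia).
  assert (Hkl : 0 < k ^ l) by (apply pow_lt; auto).
  pose proof (INR_fact_lt_0 n) as Hn.
  assert (Hmix : gamma_int (a + INR n) <=
            Rpower k a * ((1 - b) * INR (fact n) + b / k ^ l * INR (fact (n + l)))).
  { rewrite <- !gamma_int_INR.
    apply (is_RInt_gen_0_infty_le (gamma_integrand (a + INR n)) (fun t => Rpower k a *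
             ((1 - b) * gamma_integrand (INR n) t + b / k ^ l * gamma_integrand (INR (n + l)) t))).
    - intros t Ht. now apply gamma_integrand_le_mix.
    - apply gamma_int_correct. pose proof (pos_INR n). lra.
    - exact (is_RInt_gen_scal _ (Rpower k a) _ (is_RInt_gen_plus _ _ _ _
        (is_RInt_gen_scal _ (1 - b) _ (gamma_int_correct (INR n) (pos_INR _)))
        (is_RInt_gen_scal _ (b / k ^ l) _ (gamma_int_correct (INR (n + l)) (pos_INR _))))). }
  assert (b / k ^ l * INR (fact (n + l)) <= b * INR (fact n)).
  { unfold Rdiv. rewrite Rmult_assoc. apply Rmult_le_compat_l; [lra|].
    apply (Rmult_le_reg_l (k ^ l)); auto. rewrite <- Rmult_assoc, Rinv_r by lra.
    pose proof (fact_add_le n l). fold k in H. lra. }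
  rewrite gamma_int_plus_INR in Hmix by auto.
  pose proof (Rpower_pos k a).
  apply (Rmult_le_reg_r (INR (fact n))); auto. nra.
Qed.

(** * Bounding the resolvent by the Mittag-Leffler function *)

Lemma nat_floor x : 0 <= x -> exists m : nat, INR m <= x < INR m + 1.
Proof.
  intros Hx. destruct (INR_archimed 1 x ltac:(lra)) as [n Hn]. rewrite Rmult_1_r in Hn.
  revert x Hx Hn. induction n as [|n IH]; intros x Hx Hn; [simpl in Hn; lra|].
  destruct (Rlt_dec x (INR n)); [now apply IH|]. exists n. rewrite S_INR in Hn. lra.
Qed.

Lemma fact_ge_geometric Q : 0 < Q ->
  exists M, forall n, (M <= n)%nat -> 2 * Q ^ S n <= INR (fact n).
Proof.
  intros HQ. destruct (cv_speed_pow_fact Q (/ (2 * Q))) as [M HM].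
  { apply Rinv_0_lt_compat; lra. }
  exists M. intros n Hn. specialize (HM n Hn). unfold Rdist in HM.
  pose proof (INR_fact_lt_0 n). pose proof (pow_lt Q n HQ).
  rewrite Rminus_0_r, Rabs_pos_eq in HM by (left; apply Rdiv_lt_0_compat; auto).
  apply (Rmult_lt_compat_l (2 * Q * INR (fact n))) in HM; [|nra].
  replace (2 * Q * INR (fact n) * (Q ^ n / INR (fact n))) with (2 * Q ^ S n) in HM
    by (simpl; field; lra).
  replace (2 * Q * INR (fact n) * / (2 * Q)) with (INR (fact n)) in HM by (field; lra).
  lra.
Qed.

Lemma gamma_int_ge_geometric b c : 0 < b -> 1 <= c ->
  exists L, forall l, (L <= l)%nat -> c ^ l <= gamma_int (INR l * b).
Proof.
  intros Hb Hc. set (Q := Rpower c (/ b)).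
  assert (HQ : 1 <= Q).
  { unfold Q. rewrite <- (Rpower_O c) by lra.
    apply Rle_Rpower; [lra|]. left; now apply Rinv_0_lt_compat. }
  destruct (fact_ge_geometric Q ltac:(lra)) as [M HM].
  destruct (INR_archimed b (INR M + 1) Hb) as [L HL].
  exists L. intros l Hl. pose proof (pos_INR M).
  assert (Hlb : INR L * b <= INR l * b) by (apply Rmult_le_compat_r; [lra|now apply le_INR]).
  destruct (nat_floor (INR l * b)) as [m [Hm1 Hm2]]; [lra|].
  assert (HmM : (M <= m)%nat) by (apply INR_le; lra).
  (* [c^l = Q^(l b) <= Q^(m + 1) <= m! - 1 <= Gamma (1 + l b)]. *)
  assert (c ^ l <= Q ^ S m).
  { rewrite <- !Rpower_pow by lra. unfold Q. rewrite Rpower_mult.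
    apply Rle_Rpower; [lra|]. rewrite S_INR.
    apply (Rmult_le_reg_r b); [lra|].
    replace (/ b * (INR m + 1) * b) with (INR m + 1) by (field; lra). lra. }
  pose proof (HM m HmM). pose proof (pow_R1_Rle Q (S m) HQ).
  pose proof (gamma_int_ge_fact (INR l * b) m ltac:(lra) Hm1). lra.
Qed.

Lemma ex_series_mittag_leffler b z : 0 < b -> 0 <= z ->
  ex_series (fun l => z ^ l / Gamma (1 + INR l * b)).
Proof.
  intros Hb Hz. pose proof (Rmax_l 1 z). pose proof (Rmax_r 1 z). set (Z := Rmax 1 z) in *.
  destruct (gamma_int_ge_geometric b (2 * Z) Hb ltac:(lra)) as [L HL].
  apply (ex_series_incr_n _ L).
  apply (ex_series_le (K := R_AbsRing) (V := R_CompleteNormedModule) _ (fun k => (/ 2) ^ (L + k))).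
  - intros k. set (l := (L + k)%nat).
    rewrite Gamma_gamma_int. replace (1 + INR l * b - 1) with (INR l * b) by ring.
    pose proof (HL l ltac:(unfold l; lia)) as Hgl. rewrite Rpow_mult_distr in Hgl.
    pose proof (pow_lt 2 l ltac:(lra)). pose proof (pow_lt Z l ltac:(lra)).
    assert (z ^ l <= Z ^ l) by (apply pow_incr; lra).
    assert (Hg : 0 < gamma_int (INR l * b)) by (apply gamma_int_pos; pose proof (pos_INR l); nra).
    change (Rabs (z ^ l / gamma_int (INR l * b)) <= (/ 2) ^ l).
    rewrite Rabs_pos_eq
      by (apply Rmult_le_pos; [apply pow_le; lra|left; now apply Rinv_0_lt_compat]).
    rewrite pow_inv. apply (Rmult_le_reg_r (gamma_int (INR l * b))); auto.
    unfold Rdiv. rewrite Rmult_assoc, Rinv_l by lra.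
    apply (Rmult_le_reg_l (2 ^ l)); auto.
    replace (2 ^ l * (/ 2 ^ l * gamma_int (INR l * b))) with (gamma_int (INR l * b))
      by (field; lra).
    nra.
  - apply (ex_series_incr_n (fun n => (/ 2) ^ n) L), ex_series_geom.
    rewrite Rabs_pos_eq; lra.
Qed.

Lemma sum_lt_le_Series a N : (forall n, 0 <= a n) -> ex_series a -> sum_lt a (S N) <= Series a.
Proof.
  intros Ha Hex. rewrite <- sum_f_R0_sum_lt, <- sum_n_Reals.
  apply (is_lim_seq_incr_compare (sum_n a)); [apply Series_correct, Hex|].
  intros n. rewrite sum_Sn. unfold plus; simpl. pose proof (Ha (S n)). lra.
Qed.

Lemma iter_kernel_le_Rpower b l K : 0 <= b <= 1 ->
  iter_kernel b l K <= Rpower (INR (S K)) (INR l * b) / gamma_int (INR l * b).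
Proof.
  intros Hb. assert (Hg : 0 < gamma_int (INR l * b)).
  { apply gamma_int_pos. pose proof (pos_INR l). nra. }
  destruct (Compare_dec.le_lt_dec l K) as [HlK|HlK].
  - pose proof (gamma_int_rising_binom_le b l (K - l) Hb) as H.
    replace (K - l + l + 1)%nat with (S K) in H by lia.
    eapply Rle_trans; [now apply iter_kernel_le|].
    apply (Rmult_le_reg_r (gamma_int (INR l * b))); auto.
    unfold Rdiv. rewrite Rmult_assoc, Rinv_l by lra. lra.
  - rewrite iter_kernel_eq0 by auto.
    apply Rmult_le_pos; [left; apply Rpower_pos|left; now apply Rinv_0_lt_compat].
Qed.

Lemma resolvent_le_mittag_leffler b x N K : 0 < b <= 1 -> 0 <= x ->
  resolvent b (2 * x) N K <= mittag_leffler b (2 * x * Rpower (INR (S K)) b).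
Proof.
  intros Hb Hx. unfold resolvent, mittag_leffler.
  set (z := 2 * x * Rpower (INR (S K)) b).
  assert (Hz : 0 <= z) by (unfold z; pose proof (Rpower_pos (INR (S K)) b); nra).
  assert (Hg : forall l, 0 < Gamma (1 + INR l * b)).
  { intros l. rewrite Gamma_gamma_int. apply gamma_int_pos. pose proof (pos_INR l). nra. }
  eapply Rle_trans; [|apply sum_lt_le_Series].
  - apply sum_lt_le. intros l _.
    rewrite Gamma_gamma_int. replace (1 + INR l * b - 1) with (INR l * b) by ring.
    replace (z ^ l) with ((2 * x) ^ l * Rpower (INR (S K)) (INR l * b)).
    2:{ unfold z. rewrite !Rpow_mult_distr, <- (Rpower_pow l (Rpower _ b)) by apply Rpower_pos.
        rewrite Rpower_mult, (Rmult_comm b). reflexivity. }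
    unfold Rdiv. rewrite Rmult_assoc. apply Rmult_le_compat_l; [apply pow_le; lra|].
    apply iter_kernel_le_Rpower; lra.
  - intros l. apply Rmult_le_pos; [now apply pow_le|left; now apply Rinv_0_lt_compat].
  - apply ex_series_mittag_leffler; lra.
Qed.

(** * The fractional Gronwall inequality *)

Lemma max_from1_run_max f K : max_from1 f (S K) = run_max (fun i => f (S i)) K.
Proof.
  induction K as [|K IH]; [reflexivity|].
  change (Rmax (max_from1 f (S K)) (f (S (S K))) = run_max (fun i => f (S i)) (S K)).
  now rewrite IH.
Qed.

Lemma Dtau_inversion beta tau (w : nat -> R) K :
  w (S K) - w O = Rpower tau beta * frac_int beta (fun j => Dtau beta tau w (S j)) K.
Proof.
  assert (HD : forall j, sum_lt (fun i => varpi beta (j - i) * (w i - w O)) (S j) =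
                         Rpower tau beta * Dtau beta tau w j).
  { intros j. unfold Dtau. rewrite sum_f_R0_sum_lt. field. apply Rgt_not_eq, Rpower_pos. }
  rewrite <- (varrho_varpi_inversion beta (fun i => w i - w O) (S K)).
  rewrite (sum_lt_ext _ (fun j => varrho beta (S K - j) * (Rpower tau beta * Dtau beta tau w j)))
    by (intros; now rewrite HD).
  assert (Dtau beta tau w O = 0) by (unfold Dtau; simpl; ring).
  rewrite sum_lt_Sl, H, !Rmult_0_r, Rplus_0_l.
  unfold frac_int. rewrite <- sum_lt_scal. apply sum_lt_ext. intros j _.
  rewrite varrho_rising_binom. simpl (S K - S j)%nat. ring.
Qed.

Section Fractional_gronwall.

Variables (beta tau Lam : R) (nT : nat) (g lam v : nat -> R).
Hypothesis Hbeta : 0 < beta < 1.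
Hypothesis Htau : 0 < tau.
Hypothesis HnT : (0 < nT)%nat.
Hypothesis Hg : forall k, (k <= nT)%nat -> 0 <= g k.
Hypothesis Hlam : forall l, (l < nT)%nat -> 0 <= lam l.
Hypothesis HLam : forall k, (1 <= k <= nT)%nat -> sum_f_R0 lam (k - 1) <= Lam.
Hypothesis Hstep : Rpower tau beta * (2 * Lam * (1 + beta)) <= 1.
Hypothesis Hv : forall k, (k <= nT)%nat -> 0 <= v k.
Hypothesis HD : forall k, (1 <= k <= nT)%nat ->
  Dtau beta tau v k <= sum_f_R0 (fun i => lam (k - S i)%nat * v (S i)) (k - 1) + g k.

Let x := Lam * Rpower tau beta.
Let G m := sum_f_R0 (fun j => Rpower tau beta * varrho beta (m - j) * g j) m.
Let V i := v (S i).
Let F K := v O + max_from1 G (S K).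

Lemma x_le_half : 0 <= x <= 1 / 2.
Proof.
  assert (0 <= Lam).
  { pose proof (HLam 1 ltac:(lia)). pose proof (Hlam O HnT). simpl in *. lra. }
  pose proof (Rpower_pos tau beta). unfold x. nra.
Qed.

Lemma G_ge0 m : (m <= nT)%nat -> 0 <= G m.
Proof.
  intros Hm. unfold G. rewrite sum_f_R0_sum_lt. apply sum_lt_ge0. intros j Hj.
  rewrite varrho_rising_binom. pose proof (Rpower_pos tau beta).
  pose proof (rising_binom_ge0 beta (m - j) ltac:(lra)). pose proof (Hg j ltac:(lia)).
  apply Rmult_le_pos; [apply Rmult_le_pos|]; lra.
Qed.

Lemma F_ge0 K : (K < nT)%nat -> 0 <= F K.
Proof.
  intros HK. unfold F. rewrite max_from1_run_max.
  pose proof (run_max_ge (fun i => G (S i)) K O ltac:(lia)) as HG. cbv beta in HG.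
  pose proof (G_ge0 1 ltac:(lia)). pose proof (Hv O ltac:(lia)). lra.
Qed.

Lemma F_mono i K : (i <= K)%nat -> F i <= F K.
Proof.
  intros HiK. unfold F. rewrite !max_from1_run_max.
  pose proof (run_max_mono (fun i => G (S i)) i K HiK). lra.
Qed.

Lemma Dtau_le_run_max j : (j < nT)%nat -> Dtau beta tau v (S j) <= Lam * run_max V j + g (S j).
Proof.
  intros Hj. pose proof (HD (S j) ltac:(lia)) as HDj. pose proof (HLam (S j) ltac:(lia)) as HL.
  rewrite Nat.sub_1_r in HDj, HL. simpl Nat.pred in HDj, HL. rewrite sum_f_R0_sum_lt in HDj, HL.
  enough (sum_lt (fun i => lam (S j - S i)%nat * v (S i)) (S j) <= Lam * run_max V j) by lra.
  rewrite <- sum_lt_rev in HL.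
  apply Rle_trans with (sum_lt (fun i => lam (S j - S i)%nat) (S j) * run_max V j).
  - rewrite Rmult_comm, <- sum_lt_scal. apply sum_lt_le. intros i Hi.
    rewrite (Rmult_comm (run_max V j)).
    apply Rmult_le_compat_l; [apply Hlam; lia|apply (run_max_ge V j i); lia].
  - apply Rmult_le_compat_r; [|exact HL].
    eapply Rle_trans; [apply (Hv 1); lia|apply (run_max_ge V j 0); lia].
Qed.

Lemma frac_int_g_le K : (K < nT)%nat ->
  Rpower tau beta * frac_int beta (fun j => g (S j)) K <= G (S K).
Proof.
  intros HK. unfold G, frac_int. rewrite sum_f_R0_sum_lt, (sum_lt_Sl _ (S K)), <- sum_lt_scal.
  assert (0 <= Rpower tau beta * varrho beta (S K - 0) * g O).
  { rewrite varrho_rising_binom. pose proof (Rpower_pos tau beta).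
    pose proof (rising_binom_ge0 beta (S K - 0) ltac:(lra)). pose proof (Hg O ltac:(lia)).
    apply Rmult_le_pos; [apply Rmult_le_pos|]; lra. }
  enough (sum_lt (fun j => Rpower tau beta * (rising_binom beta (K - j) * g (S j))) (S K) =
          sum_lt (fun j => Rpower tau beta * varrho beta (S K - S j) * g (S j)) (S K)) by lra.
  apply sum_lt_ext. intros j _. rewrite varrho_rising_binom. simpl (S K - S j)%nat. ring.
Qed.

Lemma V_le_frac_int K : (K < nT)%nat -> V K <= F K + x * frac_int beta (run_max V) K.
Proof.
  intros HK. pose proof (Dtau_inversion beta tau v K) as Hinv.
  assert (Hfi : frac_int beta (fun j => Dtau beta tau v (S j)) K <=
                Lam * frac_int beta (run_max V) K + frac_int beta (fun j => g (S j)) K).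
  { unfold frac_int. rewrite <- sum_lt_scal, <- sum_lt_plus. apply sum_lt_le. intros j Hj.
    pose proof (Dtau_le_run_max j ltac:(lia)). pose proof (rising_binom_ge0 beta (K - j) ltac:(lra)).
    nra. }
  pose proof (frac_int_g_le K HK).
  pose proof (run_max_ge (fun i => G (S i)) K K (le_n K)) as HGmax.
  rewrite <- max_from1_run_max in HGmax.
  pose proof (Rpower_pos tau beta).
  apply (Rmult_le_compat_l (Rpower tau beta)) in Hfi; [|lra].
  change (V K) with (v (S K)). unfold F, x. lra.
Qed.

Lemma fractional_gronwall_resolvent k : (1 <= k <= nT)%nat ->
  v k <= 2 * (v O + max_from1 G k) * resolvent beta (2 * x) (nT - 1) (k - 1).
Proof.
  intros Hk.
  pose proof (discrete_gronwall beta x (nT - 1) V F ltac:(lra) x_le_half (Hv 1 ltac:(lia))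
                (fun K _ => F_ge0 K ltac:(lia)) (fun i K H => F_mono i K ltac:(lia))
                (fun K _ => V_le_frac_int K ltac:(lia)) (k - 1) ltac:(lia)) as H.
  unfold V, F in H. now replace (S (k - 1)) with k in H by lia.
Qed.

Lemma fractional_gronwall k : (1 <= k <= nT)%nat ->
  v k <= 2 * mittag_leffler beta (2 * Lam * Rpower (INR k * tau) beta) * (v O + max_from1 G k).
Proof.
  intros Hk. pose proof (fractional_gronwall_resolvent k Hk) as Hres.
  pose proof (resolvent_le_mittag_leffler beta x (nT - 1) (k - 1) ltac:(lra)
                (proj1 x_le_half)) as HML.
  replace (S (k - 1)) with k in HML by lia.
  replace (2 * x * Rpower (INR k) beta) with (2 * Lam * Rpower (INR k * tau) beta) in HML
    by (unfold x; rewrite <- Rpower_mult_distr by (auto; apply lt_0_INR; lia); ring).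
  pose proof (F_ge0 (k - 1) ltac:(lia)) as HF. unfold F in HF.
  replace (S (k - 1)) with k in HF by lia.
  eapply Rle_trans; [exact Hres|]. nra.
Qed.

End Fractional_gronwall.

Theorem corollary2p1
  (beta T : R) (nT : nat) (g lam v : nat -> R) (Lam : R) :
  0 < beta < 1 -> 0 < T -> (0 < nT)%nat ->
  let tau := T / INR nT in
  (forall k, (k <= nT)%nat -> 0 <= g k) ->
  (forall l, (l < nT)%nat -> 0 <= lam l) ->
  (forall k, (1 <= k <= nT)%nat -> sum_f_R0 lam (k - 1) <= Lam) ->
  Rpower tau beta * (2 * Lam * (1 + beta)) <= 1 ->
  (forall k, (k <= nT)%nat -> 0 <= v k) ->
  (forall k, (1 <= k <= nT)%nat ->
     Dtau beta tau v k <=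
       sum_f_R0 (fun i => lam (k - S i)%nat * v (S i)) (k - 1) + g k) ->
  forall k, (1 <= k <= nT)%nat ->
    v k <= 2 * mittag_leffler beta (2 * Lam * Rpower (INR k * tau) beta) *
           (v O + max_from1
                    (fun m => sum_f_R0 (fun j => Rpower tau beta * varrho beta (m - j) * g j) m)
                    k).
Proof.
  intros Hbeta HT HnT tau Hg Hlam HLam Hstep Hv HD.
  assert (Htau : 0 < tau) by (apply Rdiv_lt_0_compat; [lra|apply lt_0_INR; lia]).
  exact (fractional_gronwall beta tau Lam nT g lam v Hbeta Htau HnT Hg Hlam HLam Hstep Hv HD).
Qed.
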